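(* Let $d\ge 1$, let $x\sim\mathcal N(0,\Sigma)$ on $\mathbb R^d$ with $\Sigma=\mathrm{diag}(\sigma_1^2,\ldots,\sigma_d^2)$ and $\sigma_1^2>\sigma_2^2>\cdots>\sigma_d^2>0$, let $\varepsilon\in(0,1)$, $R>0$ and $T_{\mathrm{wu}}\ge 0$. For $j=1,\dots,d$ and $T\ge0$ let $$g_j(T)=\Bigl(1+\tfrac{1-\varepsilon^2}{\varepsilon^2}\,e^{-4\sigma_j^2 T}\Bigr)^{-1}$$ (the activation $u_jv_j$ of mode $j$ at time $T$ of the plain-autoencoder flow below started from $u_j(0)=v_j(0)=\varepsilon$). Define $$m^{\mathrm{wu}}(T_{\mathrm{wu}},R):=\max\Bigl\{m\in\{1,\dots,d\}:\ R>\tfrac12\sum_{i=1}^{m-1}\log_2\frac{\sigma_i^2\,g_i(T_{\mathrm{wu}})}{\sigma_m^2\,g_m(T_{\mathrm{wu}})}\Bigr\}.$$ Consider the following two-phase training (warm-up then RD-AE) of the diagonal linear model $W_1=\mathrm{diag}(u_1,\dots,u_d)$, $W_2=\mathrm{diag}(v_1,\dots,v_d)$: on $[0,T_{\mathrm{wu}}]$ run the plain-autoencoder flow from $u_j(0)=v_j(0)=\varepsilon$, and for $t\ge T_{\mathrm{wu}}$ run the RD-AE flow at rate $R$ with commitment weight $\beta=1$ (both flows defined in the context). Then at convergence at most $m^{\mathrm{wu}}$ modes remain active, and the limiting reconstruction loss satisfies $$L_{\mathrm{rec}}^{\infty}\;\ge\; m^{\mathrm{wu}}\,\delta_{m^{\mathrm{wu}}}(R)+\sum_{j>m^{\mathrm{wu}}}\sigma_j^2,\qquad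 \delta_m(R):=\Bigl(\prod_{i=1}^m\sigma_i^2\Bigr)^{1/m}2^{-2R/m}.$$
   Context: Plain-autoencoder flow (per mode $j$): $\dot u_j=2\sigma_j^2 v_j(1-u_jv_j)$, $\dot v_j=2\sigma_j^2 u_j(1-u_jv_j)$. RD-AE channel at rate $R$ (bits): given the current parameters, the latent coordinates $z_j=u_jx_j$ have variances $\lambda_j=u_j^2\sigma_j^2$. The water level $D^\star=D^\star(\lambda_1,\dots,\lambda_d;R)$ is the unique solution of $\sum_{j}\tfrac12\log_2^+(\lambda_j/D^\star)=R$ (where $\log_2^+ y=\max(\log_2 y,0)$). Set $D_j=\min(\lambda_j,D^\star)$, $c_j=1-D_j/\lambda_j$, $\tau_j^2=c_jD^\star$. Mode $j$ is called active if $\lambda_j>D^\star$ and inactive otherwise (then $c_j=\tau_j^2=0$). This corresponds to the rate-distortion-optimal Gaussian channel $z_{q,j}\mid z_j\sim\mathcal N(c_jz_j,\tau_j^2)$ minimizing $\mathbb E\|z-z_q\|^2$ subject to $I(z;z_q)\le R$. RD-AE flow with commitment weight $\beta$ (channel parameters $c_j,D_j$ recomputed from the current $\lambda_j$ at every time): $\dot u_j=2\sigma_j^2 v_j(1-c_ju_jv_j)-\dfrac{2\beta D_j}{u_j}$, $\dot v_j=2\sigma_j^2c_ju_j(1-u_jv_j)$. Reconstruction loss: $L_{\mathrm{rec}}(u,v)=\sum_{j=1}^d\bigl[\sigma_j^2(1-c_ju_jv_j)^2+v_j^2\tau_j^2\bigr]$ (the expected value of $\|x-W_2z_q\|^2$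 through this channel), and $L_{\mathrm{rec}}^\infty$ denotes its limit as $t\to\infty$ along the two-phase trajectory. *)

From Stdlib Require Import Reals Lra Lia.
From Coquelicot Require Import Coquelicot.
Open Scope R_scope.

(* Modes are indexed 0 .. d-1 (mode j here = mode j+1 of the paper).
   s j stands for sigma_{j+1}^2. *)

Fixpoint fsum (n : nat) (f : nat -> R) : R :=
  match n with O => 0 | S k => fsum k f + f k end.

Fixpoint fprod (n : nat) (f : nat -> R) : R :=
  match n with O => 1 | S k => fprod k f * f k end.

Fixpoint fcount (n : nat) (P : nat -> Prop) (Pdec : forall j, {P j} + {~ P j}) : nat :=
  match n with
  | O => O
  | S k => (if Pdec k then 1 else 0) + fcount k P Pdec
  end%nat.

Definition log2 (y : R) : R := ln y / ln 2.
Definition log2p (y : R) : R := Rmax (log2 y) 0.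

Definition is_water_level (d : nat) (lam : nat -> R) (R0 D : R) : Prop :=
  0 < D /\ fsum d (fun j => / 2 * log2p (lam j / D)) = R0.

Definition Dj (lamj D : R) : R := Rmin lamj D.
Definition cj (lamj D : R) : R := if Rlt_dec D lamj then 1 - Dj lamj D / lamj else 0.
Definition tau2j (lamj D : R) : R := cj lamj D * D.

Definition g (eps sj T : R) : R :=
  / (1 + (1 - eps ^ 2) / eps ^ 2 * exp (- 4 * sj * T)).

(* condition defining m^wu (m is 1-based, 1 <= m <= d) *)
Definition mwu_cond (s : nat -> R) (eps Twu R0 : R) (m : nat) : Prop :=
  R0 > / 2 * fsum (m - 1)
         (fun i => log2 ((s i * g eps (s i) Twu) /
                         (s (m - 1)%nat * g eps (s (m - 1)%nat) Twu))).

Definition is_mwu (d : nat) (s : nat -> R) (eps Twu R0 : R) (m : nat) : Prop :=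
  (1 <= m <= d)%nat /\ mwu_cond s eps Twu R0 m /\
  (forall m', (m < m' <= d)%nat -> ~ mwu_cond s eps Twu R0 m').

Definition delta (s : nat -> R) (m : nat) (R0 : R) : R :=
  Rpower (fprod m s) (/ INR m) * Rpower 2 (- 2 * R0 / INR m).

Definition lam (s : nat -> R) (u : nat -> R -> R) (t : R) : nat -> R :=
  fun j => u j t ^ 2 * s j.

Definition Lrec (d : nat) (s : nat -> R) (u v : nat -> R -> R) (Dt t : R) : R :=
  fsum d (fun j =>
    s j * (1 - cj (lam s u t j) Dt * u j t * v j t) ^ 2
    + v j t ^ 2 * tau2j (lam s u t j) Dt).

From Stdlib Require Import Reals Lra Lia Psatz.
From Coquelicot Require Import Coquelicot.
Open Scope R_scope.

(* During the warm-up every mode stays balanced ([u_j = v_j]) and its activation [u_j^2]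
   follows the logistic law [g_j], so at [T_wu] the latent variances [lambda_j = sigma_j^2 g_j]
   are strictly decreasing in [j]; maximality of [m^wu] says precisely that the water level at
   [T_wu] then lies above [lambda_j] for every [j >= m^wu].  In the RD-AE phase the balance
   persists (Gronwall on [(u_j - v_j)^2]) and [d/dt u_j^2 = 4 (1 - u_j^2) (lambda_j - D^* )^+],
   so all variances, hence the water level, are nondecreasing, while a mode below the water level
   cannot overtake it.  Finally, given its latent variance, mode [j] loses at least
   [sigma_j^2 D_j / lambda_j]; AM-GM over the first [m^wu] modes, where
   [prod_j D_j / lambda_j = 2^(-2R)], gives the bound on the loss. *)

Lemma is_derive_Rmult (f h : R -> R) (x df dh : R) :
  is_derive f x df -> is_derive h x dh ->
  is_derive (fun t => f t * h t) x (df * h x + f x * dh).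
Proof. intros Hf Hh. apply (is_derive_mult f h x df dh Hf Hh). intros; apply Rmult_comm. Qed.

Lemma is_derive_Rconst (c x : R) : is_derive (fun _ => c) x 0.
Proof. apply (is_derive_const (K := R_AbsRing) (V := R_NormedModule)). Qed.

Lemma is_derive_Rid (x : R) : is_derive (fun t => t) x 1.
Proof. apply (is_derive_id (K := R_AbsRing)). Qed.

Lemma is_derive_Rplus (f h : R -> R) (x df dh : R) :
  is_derive f x df -> is_derive h x dh -> is_derive (fun t => f t + h t) x (df + dh).
Proof. intros Hf Hh. exact (is_derive_plus f h x df dh Hf Hh). Qed.

Lemma is_derive_Ropp (f : R -> R) (x df : R) :
  is_derive f x df -> is_derive (fun t => - f t) x (- df).
Proof. intros Hf. exact (is_derive_opp f x df Hf). Qed.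

Lemma is_derive_Rminus (f h : R -> R) (x df dh : R) :
  is_derive f x df -> is_derive h x dh -> is_derive (fun t => f t - h t) x (df - dh).
Proof. intros Hf Hh. exact (is_derive_minus f h x df dh Hf Hh). Qed.

Lemma is_derive_Rexp (f : R -> R) (x df : R) :
  is_derive f x df -> is_derive (fun t => exp (f t)) x (df * exp (f x)).
Proof. intros H. apply (is_derive_comp exp f x (exp (f x)) df (is_derive_exp (f x)) H). Qed.

Lemma is_derive_eq (f : R -> R) (x l l' : R) : is_derive f x l -> l = l' -> is_derive f x l'.
Proof. intros H ->; exact H. Qed.

Lemma is_derive_Rsqr (f : R -> R) (x df : R) :
  is_derive f x df -> is_derive (fun t => f t ^ 2) x (2 * f x * df).
Proof.
  intros H. apply (is_derive_ext (fun t => f t * f t)); [intros t; simpl; rewrite Rmult_1_r; reflexivity |].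
  apply (is_derive_eq _ _ (df * f x + f x * df)); [apply is_derive_Rmult; exact H | ring].
Qed.

Section FilterLimits.

Variable (F : (R -> Prop) -> Prop).
Context {FF : Filter F}.

Lemma filterlim_Rplus (f h : R -> R) (a b : R) :
  filterlim f F (locally a) -> filterlim h F (locally b) ->
  filterlim (fun t => f t + h t) F (locally (a + b)).
Proof. intros Hf Hh. eapply filterlim_comp_2; [exact Hf | exact Hh | apply (filterlim_plus a b)]. Qed.

Lemma filterlim_Rmult (f h : R -> R) (a b : R) :
  filterlim f F (locally a) -> filterlim h F (locally b) ->
  filterlim (fun t => f t * h t) F (locally (a * b)).
Proof. intros Hf Hh. eapply filterlim_comp_2; [exact Hf | exact Hh | apply (filterlim_mult a b)]. Qed.

Lemma filterlim_Ropp (f : R -> R) (a : R) :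
  filterlim f F (locally a) -> filterlim (fun t => - f t) F (locally (- a)).
Proof. intros Hf. eapply filterlim_comp; [exact Hf | apply (filterlim_opp a)]. Qed.

Lemma filterlim_Rminus (f h : R -> R) (a b : R) :
  filterlim f F (locally a) -> filterlim h F (locally b) ->
  filterlim (fun t => f t - h t) F (locally (a - b)).
Proof. intros Hf Hh. apply filterlim_Rplus; [exact Hf | apply filterlim_Ropp, Hh]. Qed.

Lemma filterlim_Rsqr (f : R -> R) (a : R) :
  filterlim f F (locally a) -> filterlim (fun t => f t ^ 2) F (locally (a ^ 2)).
Proof.
  intros Hf. apply (filterlim_ext (fun t => f t * f t)); [intros t; simpl; rewrite Rmult_1_r; reflexivity |].
  replace (a ^ 2) with (a * a) by ring. apply filterlim_Rmult; exact Hf.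
Qed.

Lemma filterlim_Rexp (f : R -> R) (a : R) :
  filterlim f F (locally a) -> filterlim (fun t => exp (f t)) F (locally (exp a)).
Proof.
  intros Hf. eapply filterlim_comp; [exact Hf |].
  apply continuity_pt_filterlim, derivable_continuous_pt, derivable_pt_exp.
Qed.

End FilterLimits.

Ltac derive_tac :=
  lazymatch goal with
  | |- is_derive (fun _ => ?c) _ _ => apply is_derive_Rconst
  | |- is_derive (fun t => t) _ _ => apply is_derive_Rid
  | |- is_derive (fun t => @?f t * @?h t) ?x _ => apply (is_derive_Rmult f h x); derive_tac
  | |- is_derive (fun t => @?f t - @?h t) ?x _ => apply (is_derive_Rminus f h x); derive_tac
  | |- is_derive (fun t => @?f t + @?h t) ?x _ => apply (is_derive_Rplus f h x); derive_tac
  | |- is_derive (fun t => - @?f t) ?x _ => apply (is_derive_Ropp f x); derive_tac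
  | |- is_derive (fun t => exp (@?f t)) ?x _ => apply (is_derive_Rexp f x); derive_tac
  | |- is_derive (fun t => @?f t ^ 2) ?x _ => apply (is_derive_Rsqr f x); derive_tac
  | |- is_derive (fun t => ?u t) _ _ => eassumption
  end.

Ltac limit_tac :=
  first
  [ assumption
  | apply filterlim_const
  | refine (filterlim_Rmult _ (fun t => _) (fun t => _) _ _ _ _); limit_tac
  | refine (filterlim_Rminus _ (fun t => _) (fun t => _) _ _ _ _); limit_tac
  | refine (filterlim_Rplus _ (fun t => _) (fun t => _) _ _ _ _); limit_tac
  | refine (filterlim_Rexp _ (fun t => _) _ _); limit_tac
  | refine (filterlim_Ropp _ (fun t => _) _ _); limit_tac
  | refine (filterlim_Rsqr _ (fun t => _) _ _); limit_tac ].

Lemma filterlim_at_right_id (a : R) : filterlim (fun t => t) (at_right a) (locally a).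
Proof. intros P [e He]. exists e. intros y Hy _. apply He, Hy. Qed.

Lemma filterlim_at_right_of_continuous (f : R -> R) (a : R) :
  continuous f a -> filterlim f (at_right a) (locally (f a)).
Proof. intros H P HP. destruct (H P HP) as [e He]. exists e. intros y Hy _. apply He, Hy. Qed.

Lemma filterlim_at_right_of_continuous_on (f : R -> R) (a b : R) : a <= b ->
  filterlim f (at_right a) (locally (f a)) -> (forall t, a < t -> continuous f t) ->
  filterlim f (at_right b) (locally (f b)).
Proof.
  intros Hab Hra Hc. destruct (Req_dec a b) as [<- | Hne]; [exact Hra |].
  apply filterlim_at_right_of_continuous, Hc. lra.
Qed.

Lemma continuous_Rmax_of_at_right (f : R -> R) (a : R) :
  filterlim f (at_right a) (locally (f a)) -> continuous (fun x => f (Rmax a x)) a.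
Proof.
  intros H P HP. rewrite Rmax_left in HP by lra.
  destruct (H P HP) as [e He]. exists e. intros y Hy.
  destruct (Rle_dec y a) as [Hya | Hya].
  - rewrite Rmax_left by lra. apply locally_singleton, HP.
  - rewrite Rmax_right by lra. apply He; [exact Hy | lra].
Qed.

Lemma nonincreasing_of_derive_nonpos (f df : R -> R) (a b : R) : a <= b ->
  (forall t, a < t < b -> is_derive f t (df t)) ->
  (forall t, a < t < b -> df t <= 0) ->
  (a < b -> continuous f b) ->
  filterlim f (at_right a) (locally (f a)) -> f b <= f a.
Proof.
  intros Hab Hd Hneg Hcb Hra.
  destruct (Req_dec a b) as [<- | Hne]; [lra |].
  set (F := fun x => f (Rmax a x)).
  assert (HFf : forall x, a < x -> locally x (fun y => f y = F y)).
  { intros x Hx. assert (Hxa : 0 < x - a) by lra. exists (mkposreal _ Hxa). intros y Hy.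
    change (Rabs (y - x) < x - a) in Hy. apply Rabs_def2 in Hy.
    unfold F. rewrite Rmax_right by lra. reflexivity. }
  (* [Rmin (df x) 0] agrees with [df] inside (a, b) and stays nonpositive at the endpoints,
     where the mean value theorem might place its point. *)
  destruct (MVT_gen F a b (fun x => Rmin (df x) 0)) as [c [_ Hc]].
  - rewrite Rmin_left, Rmax_right by lra. intros x Hx.
    rewrite Rmin_left by (apply Hneg; lra).
    apply (is_derive_ext_loc f); [apply HFf; lra | apply Hd; lra].
  - rewrite Rmin_left, Rmax_right by lra. intros x Hx. apply continuity_pt_filterlim.
    destruct (Req_dec x a) as [-> | Hxa]; [apply continuous_Rmax_of_at_right, Hra |].
    apply (continuous_ext_loc F f); [apply HFf; lra |].
    destruct (Req_dec x b) as [-> | Hxb]; [apply Hcb; lra |].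
    apply (ex_derive_continuous (K := R_AbsRing) (V := R_NormedModule)). eexists. apply Hd. lra.
  - unfold F in Hc. rewrite (Rmax_right a b), (Rmax_left a a) in Hc by lra.
    pose proof (Rmin_r (df c) 0). nra.
Qed.

Lemma constant_of_derive_zero (f : R -> R) (a b : R) : a <= b ->
  (forall t, a < t < b -> is_derive f t 0) ->
  (a < b -> continuous f b) ->
  filterlim f (at_right a) (locally (f a)) -> f b = f a.
Proof.
  intros Hab Hd Hcb Hra.
  assert (f b <= f a) by (apply (nonincreasing_of_derive_nonpos f (fun _ => 0)); auto; intros; lra).
  assert (- f b <= - f a); [| lra].
  apply (nonincreasing_of_derive_nonpos (fun t => - f t) (fun _ => 0)); auto.
  - intros t Ht. apply (is_derive_eq _ _ (- 0)); [apply is_derive_Ropp, Hd, Ht | ring].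
  - intros; lra.
  - intros Hlt. apply (continuous_opp f), Hcb, Hlt.
  - apply filterlim_Ropp, Hra.
Qed.

Lemma is_derive_pos_part_sqr (x : R) :
  is_derive (fun y => Rmax y 0 * Rmax y 0) x (2 * Rmax x 0).
Proof.
  destruct (Rtotal_order x 0) as [Hx | [-> | Hx]].
  - assert (Hpos : 0 < - x) by lra.
    apply (is_derive_ext_loc (fun _ => 0)).
    { exists (mkposreal _ Hpos). intros y Hy. change (Rabs (y - x) < - x) in Hy.
      apply Rabs_def2 in Hy. rewrite Rmax_right by lra. lra. }
    rewrite Rmax_right by lra. apply (is_derive_eq _ _ 0); [derive_tac | ring].
  - rewrite Rmax_right by lra. apply is_derive_Reals.
    intros e He. exists (mkposreal e He). intros k Hk0 Hk. simpl in Hk.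
    rewrite Rplus_0_l, (Rmax_right 0 0) by lra.
    destruct (Rle_dec k 0) as [Hk' | Hk'].
    + rewrite Rmax_right by lra.
      replace ((0 * 0 - 0 * 0) / k - 2 * 0) with 0 by (field; lra). rewrite Rabs_R0. lra.
    + rewrite Rmax_left by lra. replace ((k * k - 0 * 0) / k - 2 * 0) with k by (field; lra). exact Hk.
  - apply (is_derive_ext_loc (fun y => y * y)).
    { exists (mkposreal _ Hx). intros y Hy. change (Rabs (y - x) < x) in Hy.
      apply Rabs_def2 in Hy. rewrite Rmax_left by lra. reflexivity. }
    rewrite Rmax_left by lra. apply (is_derive_eq _ _ (1 * x + x * 1)); [derive_tac | ring].
Qed.

(* The Lyapunov function [(max h 0)^2 e^{-2Kt}] is nonincreasing. *)
Lemma Gronwall_nonpos (h dh : R -> R) (a b K : R) : a <= b ->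
  (forall t, a < t < b -> is_derive h t (dh t)) ->
  (forall t, a < t < b -> 0 < h t -> dh t <= K * h t) ->
  (a < b -> continuous h b) ->
  filterlim h (at_right a) (locally (h a)) -> h a <= 0 -> h b <= 0.
Proof.
  intros Hab Hd Hle Hcb Hra Ha.
  set (q := fun y => Rmax y 0 * Rmax y 0).
  set (Phi := fun t => q (h t) * exp (- (2 * K) * t)).
  assert (Hlim : forall (F : (R -> Prop) -> Prop) {FF : Filter F} x,
    filterlim h F (locally (h x)) -> filterlim (fun t => t) F (locally x) ->
    filterlim Phi F (locally (Phi x))).
  { intros F FF x Hh Hid. unfold Phi.
    refine (filterlim_Rmult _ (fun t => _) (fun t => _) _ _ _ _); [| limit_tac].
    eapply filterlim_comp; [exact Hh |].
    apply (ex_derive_continuous (K := R_AbsRing) (V := R_NormedModule) q).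
    eexists. apply is_derive_pos_part_sqr. }
  assert (HPhi : Phi b <= Phi a).
  { apply (nonincreasing_of_derive_nonpos Phi (fun t =>
      dh t * (2 * Rmax (h t) 0) * exp (- (2 * K) * t)
      + q (h t) * ((0 * t + - (2 * K) * 1) * exp (- (2 * K) * t)))); auto.
    - intros t Ht. unfold Phi. apply (is_derive_Rmult (fun t => q (h t)) (fun t => exp (- (2 * K) * t))).
      + apply (is_derive_comp q h); [apply is_derive_pos_part_sqr | auto].
      + derive_tac.
    - intros t Ht. pose proof (exp_pos (- (2 * K) * t)). unfold q.
      destruct (Rle_dec (h t) 0) as [Hn | Hp].
      + rewrite Rmax_right by lra. nra.
      + rewrite Rmax_left by lra. specialize (Hle t Ht ltac:(lra)).
        assert (h t * (dh t - K * h t) <= 0) by nra. nra.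
    - intros Hlt. apply (Hlim _ _); [apply Hcb, Hlt | apply filterlim_id].
    - apply (Hlim _ _); [exact Hra | apply filterlim_at_right_id]. }
  unfold Phi, q in HPhi. rewrite (Rmax_right (h a) 0) in HPhi by lra.
  pose proof (exp_pos (- (2 * K) * b)).
  destruct (Rle_dec (h b) 0) as [| Hp]; [assumption |].
  rewrite Rmax_left in HPhi by lra. assert (0 < h b * h b) by nra. nra.
Qed.

Lemma bounded_on_closed_interval (f : R -> R) (a b : R) : a <= b ->
  filterlim f (at_right a) (locally (f a)) ->
  (forall t, a < t <= b -> continuous f t) ->
  exists M, forall t, a <= t <= b -> Rabs (f t) <= M.
Proof.
  intros Hab Hra Hc.
  set (F := fun x => Rabs (f (Rmax a x))).
  destruct (continuity_ab_maj F a b Hab) as [x [HM _]].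
  - intros y Hy. apply continuity_pt_filterlim.
    apply (continuous_comp (fun x => f (Rmax a x)) Rabs); [| apply continuous_Rabs].
    destruct (Req_dec y a) as [-> | Hya]; [apply continuous_Rmax_of_at_right, Hra |].
    assert (Hpos : 0 < y - a) by lra.
    apply (continuous_ext_loc _ f); [| apply Hc; lra].
    exists (mkposreal _ Hpos). intros z Hz. change (Rabs (z - y) < y - a) in Hz.
    apply Rabs_def2 in Hz. rewrite Rmax_right by lra. reflexivity.
  - exists (F x). intros t Ht. specialize (HM t Ht).
    unfold F in HM. rewrite Rmax_right in HM by lra. exact HM.
Qed.

Lemma fsum_ext n f h : (forall j, (j < n)%nat -> f j = h j) -> fsum n f = fsum n h.
Proof.
  induction n as [| n IH]; intros H; simpl; [reflexivity |].
  rewrite IH by (intros; apply H; lia). rewrite H by lia. reflexivity.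
Qed.

Lemma fsum_le n f h : (forall j, (j < n)%nat -> f j <= h j) -> fsum n f <= fsum n h.
Proof.
  induction n as [| n IH]; intros H; simpl; [lra |].
  pose proof (H n ltac:(lia)). assert (fsum n f <= fsum n h) by (apply IH; intros; apply H; lia). lra.
Qed.

Lemma fsum_lt n f h j0 : (j0 < n)%nat ->
  (forall j, (j < n)%nat -> f j <= h j) -> f j0 < h j0 -> fsum n f < fsum n h.
Proof.
  induction n as [| n IH]; intros Hj H Hlt; simpl; [lia |].
  destruct (Nat.eq_dec j0 n) as [-> | Hne].
  - assert (fsum n f <= fsum n h) by (apply fsum_le; intros; apply H; lia). lra.
  - pose proof (H n ltac:(lia)).
    assert (fsum n f < fsum n h) by (apply IH; [lia | intros; apply H; lia | exact Hlt]). lra.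
Qed.

Lemma fsum_pos_exists n f : 0 < fsum n f -> exists j, (j < n)%nat /\ 0 < f j.
Proof.
  induction n as [| n IH]; simpl; intros H; [lra |].
  destruct (Rlt_dec 0 (f n)) as [Hn | Hn]; [exists n; split; [lia | exact Hn] |].
  destruct IH as [j [Hj Hf]]; [lra |]. exists j. split; [lia | exact Hf].
Qed.

Lemma fsum_plus n f h : fsum n (fun j => f j + h j) = fsum n f + fsum n h.
Proof. induction n; simpl; [| rewrite IHn]; lra. Qed.

Lemma fsum_scal n c f : fsum n (fun j => c * f j) = c * fsum n f.
Proof. induction n; simpl; [| rewrite IHn]; lra. Qed.

Lemma fsum_const n c : fsum n (fun _ => c) = INR n * c.
Proof. induction n; simpl fsum; [simpl; lra |]. rewrite IHn, S_INR. lra. Qed.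

Lemma fsum_tail_eq n m f h : (m <= n)%nat -> (forall j, (m <= j < n)%nat -> f j = h j) ->
  fsum n f - fsum m f = fsum n h - fsum m h.
Proof.
  induction n as [| n IH]; intros Hmn Hfh.
  - replace m with 0%nat by lia. simpl. lra.
  - destruct (Nat.eq_dec m (S n)) as [-> | Hne]; [lra |].
    simpl. rewrite (Hfh n) by lia.
    assert (fsum n f - fsum m f = fsum n h - fsum m h) by (apply IH; [lia | intros; apply Hfh; lia]). lra.
Qed.

Lemma fsum_le_prefix n1 n2 f : (n1 <= n2)%nat -> (forall j, (j < n2)%nat -> 0 <= f j) ->
  fsum n1 f <= fsum n2 f.
Proof.
  induction n2 as [| n2 IH]; intros H Hf.
  - replace n1 with 0%nat by lia. lra.
  - destruct (Nat.eq_dec n1 (S n2)) as [-> | Hne]; [lra |]. simpl.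
    assert (fsum n1 f <= fsum n2 f) by (apply IH; [lia | intros; apply Hf; lia]).
    pose proof (Hf n2 ltac:(lia)). lra.
Qed.

Lemma fcount_le n (P : nat -> Prop) Pdec m : (forall j, (m <= j < n)%nat -> ~ P j) ->
  (fcount n P Pdec <= m)%nat.
Proof.
  intros H. enough (Hmin : forall k, (k <= n)%nat -> (fcount k P Pdec <= Nat.min k m)%nat)
    by (specialize (Hmin n (le_n n)); lia).
  induction k as [| k IH]; intros Hk; cbn [fcount]; [lia |].
  specialize (IH ltac:(lia)). destruct (Pdec k) as [Hp |]; [| lia].
  destruct (Nat.lt_ge_cases k m); [lia |]. exfalso. apply (H k); [lia | exact Hp].
Qed.

Lemma ln_fprod n f : (forall j, (j < n)%nat -> 0 < f j) ->
  0 < fprod n f /\ ln (fprod n f) = fsum n (fun j => ln (f j)).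
Proof.
  induction n as [| n IH]; simpl; intros H; [split; [lra | apply ln_1] |].
  destruct IH as [Hpos Hln]; [intros; apply H; lia |]. pose proof (H n ltac:(lia)).
  split; [nra |]. rewrite ln_mult, Hln by auto. reflexivity.
Qed.

(* The tangent-line bound [ln (a_j / G) <= a_j / G - 1] at the geometric mean [G], summed over [j]. *)
Lemma AM_GM n a : (1 <= n)%nat -> (forall j, (j < n)%nat -> 0 < a j) ->
  INR n * exp (fsum n (fun j => ln (a j)) / INR n) <= fsum n a.
Proof.
  intros Hn Ha. set (S := fsum n (fun j => ln (a j))). set (G := exp (S / INR n)).
  assert (HG : 0 < G) by apply exp_pos.
  assert (Hn0 : 0 < INR n) by (apply lt_0_INR; lia).
  assert (Htan : fsum n (fun j => ln (a j) - ln G) <= fsum n (fun j => / G * a j - 1)).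
  { apply fsum_le. intros j Hj. pose proof (Ha j Hj).
    pose proof (exp_ineq1_le (ln (/ G * a j))) as Hexp.
    rewrite exp_ln in Hexp by (apply Rmult_lt_0_compat; [apply Rinv_0_lt_compat |]; lra).
    rewrite ln_mult, ln_Rinv in Hexp by (try apply Rinv_0_lt_compat; lra). lra. }
  unfold Rminus in Htan. rewrite !fsum_plus, !fsum_const, fsum_scal in Htan.
  assert (HlnG : ln G = S / INR n) by apply ln_exp.
  rewrite HlnG in Htan. fold S in Htan.
  assert (Hcancel : S + INR n * - (S / INR n) = 0) by (field; lra).
  assert (Hmul : INR n * G <= G * (/ G * fsum n a)) by nra.
  rewrite <- Rmult_assoc, Rinv_r in Hmul by lra. lra.
Qed.

Lemma Rdiv_gt_1 x y : 0 < y -> y < x -> 1 < x / y.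
Proof. intros Hy Hxy. apply (Rmult_lt_reg_r y); [lra |]. unfold Rdiv. rewrite Rmult_assoc, Rinv_l; lra. Qed.

Lemma Rdiv_le_1 x y : 0 < y -> x <= y -> x / y <= 1.
Proof. intros Hy Hxy. apply (Rmult_le_reg_r y); [lra |]. unfold Rdiv. rewrite Rmult_assoc, Rinv_l; lra. Qed.

Lemma ln2_pos : 0 < ln 2.
Proof. rewrite <- ln_1. apply ln_increasing; lra. Qed.

(* For [x <= 0] this uses Stdlib's junk value [ln x = 0]. *)
Lemma ln_nonpos x : x <= 1 -> ln x <= 0.
Proof.
  intros Hx. destruct (Rle_dec x 0) as [Hneg | Hpos].
  - unfold ln. destruct (Rlt_dec 0 x); [exfalso | ]; lra.
  - rewrite <- ln_1. destruct (Req_dec x 1) as [-> | Hne]; [lra |]. left. apply ln_increasing; lra.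
Qed.

Lemma log2_pos x : 1 < x -> 0 < log2 x.
Proof.
  intros Hx. apply Rdiv_lt_0_compat; [| apply ln2_pos].
  rewrite <- ln_1. apply ln_increasing; lra.
Qed.

Lemma log2_div_split a b c : 0 < a -> 0 < b -> 0 < c -> log2 (a / c) = log2 (a / b) + log2 (b / c).
Proof.
  intros Ha Hb Hc. pose proof ln2_pos. unfold log2, Rdiv.
  rewrite !ln_mult, !ln_Rinv by (try apply Rinv_0_lt_compat; lra). field. lra.
Qed.

Lemma log2p_nonneg x : 0 <= log2p x.
Proof. apply Rmax_r. Qed.

Lemma log2p_le_1 x : x <= 1 -> log2p x = 0.
Proof.
  intros Hx. apply Rmax_right. pose proof (ln_nonpos x Hx). pose proof ln2_pos.
  unfold log2, Rdiv. assert (0 < / ln 2) by (apply Rinv_0_lt_compat; lra). nra.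
Qed.

Lemma log2p_gt_1 x : 1 < x -> log2p x = log2 x.
Proof. intros Hx. apply Rmax_left. left. apply log2_pos, Hx. Qed.

Lemma log2p_le_compat x y : x <= y -> log2p x <= log2p y.
Proof.
  intros Hxy. destruct (Rle_dec x 1) as [Hx | Hx].
  - rewrite log2p_le_1 by exact Hx. apply log2p_nonneg.
  - rewrite !log2p_gt_1 by lra. unfold log2. pose proof ln2_pos.
    apply Rmult_le_compat_r; [left; apply Rinv_0_lt_compat; lra |].
    destruct (Req_dec x y) as [-> | Hne]; [lra | left; apply ln_increasing; lra].
Qed.

Lemma log2p_lt_compat x y : 1 < x -> x < y -> log2p x < log2p y.
Proof.
  intros Hx Hxy. rewrite !log2p_gt_1 by lra. unfold log2. pose proof ln2_pos.
  apply Rmult_lt_compat_r; [apply Rinv_0_lt_compat; lra | apply ln_increasing; lra].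
Qed.

Lemma water_level_le_compat d l1 l2 R0 D1 D2 : 0 < R0 ->
  (forall j, (j < d)%nat -> 0 <= l1 j <= l2 j) ->
  is_water_level d l1 R0 D1 -> is_water_level d l2 R0 D2 -> D1 <= D2.
Proof.
  intros HR Hl [HD1 E1] [HD2 E2].
  destruct (Rle_dec D1 D2) as [| Hlt]; [assumption | exfalso].
  destruct (fsum_pos_exists d (fun j => / 2 * log2p (l1 j / D1))) as [j0 [Hj0 Hpos]]; [lra |].
  assert (Hact : 1 < l1 j0 / D1).
  { destruct (Rle_dec (l1 j0 / D1) 1) as [Hle |]; [| lra].
    cbv beta in Hpos. rewrite log2p_le_1 in Hpos; lra. }
  assert (Hratio : forall j, (j < d)%nat -> l1 j / D1 <= l2 j / D2).
  { intros j Hj. destruct (Hl j Hj). unfold Rdiv.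
    apply Rmult_le_compat; try lra; [left; apply Rinv_0_lt_compat; lra | apply Rinv_le_contravar; lra]. }
  assert (Hstrict : l1 j0 / D1 < l2 j0 / D2).
  { destruct (Hl j0 Hj0) as [_ Hle].
    assert (0 < l1 j0) by (replace (l1 j0) with (l1 j0 / D1 * D1) by (field; lra); nra).
    apply Rlt_le_trans with (l1 j0 / D2); unfold Rdiv.
    - apply Rmult_lt_compat_l; [lra | apply Rinv_lt_contravar; nra].
    - apply Rmult_le_compat_r; [left; apply Rinv_0_lt_compat |]; lra. }
  assert (Hsum : fsum d (fun j => / 2 * log2p (l1 j / D1)) < fsum d (fun j => / 2 * log2p (l2 j / D2))).
  { apply (fsum_lt _ _ _ j0 Hj0).
    - intros j Hj. apply Rmult_le_compat_l; [lra | apply log2p_le_compat, Hratio, Hj].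
    - apply Rmult_lt_compat_l; [lra | apply log2p_lt_compat; assumption]. }
  lra.
Qed.

Lemma nonincreasing_of_succ d (L : nat -> R) :
  (forall j, (S j < d)%nat -> L (S j) <= L j) -> forall i j, (i <= j < d)%nat -> L j <= L i.
Proof.
  intros Hsucc i j Hij. induction j as [| j IH].
  - replace i with 0%nat by lia. lra.
  - destruct (Nat.eq_dec i (S j)) as [-> | Hne]; [lra |].
    pose proof (Hsucc j ltac:(lia)). assert (L j <= L i) by (apply IH; lia). lra.
Qed.

(* If mode [m] were active, the first [m + 1] modes alone would spend more than the rate [R0]. *)
Lemma inactive_beyond_rate_budget d (L : nat -> R) R0 D m :
  (forall j, (j < d)%nat -> 0 < L j) ->
  (forall i j, (i <= j < d)%nat -> L j <= L i) ->
  is_water_level d L R0 D ->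
  ((m < d)%nat -> ~ R0 > / 2 * fsum m (fun i => log2 (L i / L m))) ->
  forall j, (m <= j < d)%nat -> L j <= D.
Proof.
  intros Hpos Hdecr [HD HW] Hbudget j Hj.
  destruct (Rle_dec (L j) D) as [| Hgt]; [assumption | exfalso].
  assert (HmD : D < L m) by (pose proof (Hdecr m j Hj); lra).
  assert (Hm : 1 < L m / D) by (apply Rdiv_gt_1; lra).
  apply Hbudget; [lia |].
  assert (Hprefix : fsum (S m) (fun i => / 2 * log2p (L i / D)) <= R0).
  { rewrite <- HW. apply fsum_le_prefix; [lia |].
    intros. apply Rmult_le_pos; [lra | apply log2p_nonneg]. }
  simpl in Hprefix.
  assert (Hterms : fsum m (fun i => / 2 * log2 (L i / L m)) <= fsum m (fun i => / 2 * log2p (L i / D))).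
  { apply fsum_le. intros i Hi. apply Rmult_le_compat_l; [lra |].
    pose proof (Hdecr i m ltac:(lia)). pose proof (Hpos m ltac:(lia)).
    rewrite log2p_gt_1 by (apply Rdiv_gt_1; lra).
    rewrite (log2_div_split (L i) (L m) D) by lra. pose proof (log2_pos _ Hm). lra. }
  rewrite log2p_gt_1 in Hprefix by exact Hm. pose proof (log2_pos _ Hm).
  rewrite <- fsum_scal. lra.
Qed.

(* [D_j / lambda_j] in the notation of the channel, taken to be [1] for an inactive mode so that
   no quotient by [lambda_j = 0] occurs. *)
Definition dist_ratio (D L : R) : R := if Rlt_dec D L then D / L else 1.

Lemma dist_ratio_pos D L : 0 < D -> 0 < dist_ratio D L.
Proof. intros HD. unfold dist_ratio. destruct (Rlt_dec D L); [apply Rdiv_lt_0_compat |]; lra. Qed.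

Lemma ln_dist_ratio D L : 0 < D -> ln (dist_ratio D L) = - ln 2 * log2p (L / D).
Proof.
  intros HD. pose proof ln2_pos. unfold dist_ratio. destruct (Rlt_dec D L) as [Hact | Hin].
  - rewrite log2p_gt_1 by (apply Rdiv_gt_1; lra).
    unfold log2. replace (D / L) with (/ (L / D)) by (field; lra).
    rewrite ln_Rinv by (apply Rdiv_lt_0_compat; lra). field. lra.
  - rewrite log2p_le_1, ln_1 by (apply Rdiv_le_1; lra). ring.
Qed.

(* Given the latent variance, the loss of mode [j] is at least the rate-distortion optimum
   [s_j D_j / lambda_j]; the slack is [s_j c_j (1 - u_j v_j)^2]. *)
Lemma mode_loss_ge s uu vv D : 0 < s -> 0 < D ->
  s * dist_ratio D (uu ^ 2 * s) <=
  s * (1 - cj (uu ^ 2 * s) D * uu * vv) ^ 2 + vv ^ 2 * tau2j (uu ^ 2 * s) D.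
Proof.
  intros Hs HD. unfold dist_ratio, tau2j, cj, Dj.
  destruct (Rlt_dec D (uu ^ 2 * s)) as [Hact | Hin].
  - rewrite Rmin_right by lra.
    assert (Hu : uu <> 0) by (intros ->; simpl in Hact; lra).
    set (c := 1 - D / (uu ^ 2 * s)).
    assert (Hc : 0 < c).
    { unfold c. assert (D / (uu ^ 2 * s) < 1); [| lra].
      apply (Rmult_lt_reg_r (uu ^ 2 * s)); [lra |]. unfold Rdiv. rewrite Rmult_assoc, Rinv_l; lra. }
    assert (Hslack : s * (1 - c * uu * vv) ^ 2 + vv ^ 2 * (c * D) - s * (D / (uu ^ 2 * s))
                     = s * c * (1 - uu * vv) ^ 2) by (unfold c; field; split; [lra | exact Hu]).
    assert (0 <= s * c * (1 - uu * vv) ^ 2) by (apply Rmult_le_pos; [nra | apply pow2_ge_0]).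
    lra.
  - lra.
Qed.

Lemma loss_lower_bound d m (s L : nat -> R) R0 D :
  (1 <= m <= d)%nat -> (forall j, (j < d)%nat -> 0 < s j) ->
  is_water_level d L R0 D ->
  (forall j, (m <= j < d)%nat -> L j <= D) ->
  INR m * delta s m R0 + (fsum d s - fsum m s) <= fsum d (fun j => s j * dist_ratio D (L j)).
Proof.
  intros Hm Hs [HD HW] Hin.
  assert (Hsplit : fsum d (fun j => s j * dist_ratio D (L j)) - fsum m (fun j => s j * dist_ratio D (L j))
                   = fsum d s - fsum m s).
  { apply fsum_tail_eq; [lia |]. intros j Hj. unfold dist_ratio.
    destruct (Rlt_dec D (L j)); [specialize (Hin j Hj); lra | ring]. }
  assert (Hrate : R0 = fsum m (fun j => / 2 * log2p (L j / D))).
  { assert (Htail := fsum_tail_eq d m (fun j => / 2 * log2p (L j / D)) (fun _ => 0)).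
    rewrite !fsum_const in Htail. rewrite HW in Htail.
    enough (R0 - fsum m (fun j => / 2 * log2p (L j / D)) = 0) by lra.
    rewrite Htail by (lia || (intros j Hj; rewrite log2p_le_1 by (apply Rdiv_le_1, Hin; lra || lia); ring)).
    ring. }
  assert (Hln : fsum m (fun j => ln (s j * dist_ratio D (L j)))
                = fsum m (fun j => ln (s j)) + - 2 * ln 2 * R0).
  { rewrite Hrate, <- fsum_scal, <- fsum_plus.
    apply fsum_ext. intros j Hj.
    assert (0 < s j) by (apply Hs; lia). pose proof (dist_ratio_pos D (L j) HD).
    rewrite ln_mult, ln_dist_ratio by assumption. field. }
  assert (Hdelta : delta s m R0 = exp (fsum m (fun j => ln (s j * dist_ratio D (L j))) / INR m)).
  { unfold delta, Rpower. rewrite <- exp_plus. f_equal.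
    rewrite (proj2 (ln_fprod m s (fun j Hj => Hs j ltac:(lia)))), Hln.
    assert (0 < INR m) by (apply lt_0_INR; lia). field. lra. }
  pose proof (AM_GM m (fun j => s j * dist_ratio D (L j)) ltac:(lia)
    (fun j Hj => Rmult_lt_0_compat _ _ (Hs j ltac:(lia)) (dist_ratio_pos D (L j) HD))).
  rewrite Hdelta. lra.
Qed.

Lemma g_bounds eps s T : 0 < eps < 1 -> 0 < g eps s T < 1.
Proof.
  intros He. unfold g.
  assert (0 < (1 - eps ^ 2) / eps ^ 2) by (apply Rdiv_lt_0_compat; nra).
  pose proof (exp_pos (- 4 * s * T)).
  split; [apply Rinv_0_lt_compat; nra |].
  rewrite <- Rinv_1. apply Rinv_lt_contravar; nra.
Qed.

Lemma scaled_g_lt eps s1 s2 T : 0 < eps < 1 -> 0 <= T -> 0 < s1 -> s1 < s2 ->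
  s1 * g eps s1 T < s2 * g eps s2 T.
Proof.
  intros He HT H1 H12.
  assert (Hg : g eps s1 T <= g eps s2 T).
  { unfold g. assert (0 < (1 - eps ^ 2) / eps ^ 2) by (apply Rdiv_lt_0_compat; nra).
    assert (exp (- 4 * s2 * T) <= exp (- 4 * s1 * T)).
    { destruct (Req_dec T 0) as [-> | HT0]; [rewrite !Rmult_0_r; lra |].
      left. apply exp_increasing. nra. }
    pose proof (exp_pos (- 4 * s2 * T)).
    apply Rinv_le_contravar; nra. }
  pose proof (g_bounds eps s1 T He). nra.
Qed.

Section Warmup.

Variables (s eps Twu : R) (u v : R -> R).
Hypothesis Hs : 0 < s.
Hypothesis Heps : 0 < eps < 1.
Hypothesis Hu0 : u 0 = eps.
Hypothesis Hv0 : v 0 = eps.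
Hypothesis Hru : filterlim u (at_right 0) (locally (u 0)).
Hypothesis Hrv : filterlim v (at_right 0) (locally (v 0)).
Hypothesis Hc : forall t, 0 < t -> continuous u t /\ continuous v t.
Hypothesis Hd : forall t, 0 < t < Twu ->
  is_derive u t (2 * s * v t * (1 - u t * v t)) /\
  is_derive v t (2 * s * u t * (1 - u t * v t)).

Lemma warmup_sq_eq t : 0 <= t <= Twu -> u t ^ 2 = v t ^ 2.
Proof.
  intros Ht.
  assert (Hconst : u t ^ 2 - v t ^ 2 = u 0 ^ 2 - v 0 ^ 2).
  { apply (constant_of_derive_zero (fun t => u t ^ 2 - v t ^ 2)); [lra | | |].
    - intros x Hx. destruct (Hd x ltac:(lra)). eapply is_derive_eq; [derive_tac | ring].
    - intros Hpos. destruct (Hc t Hpos). unfold continuous. limit_tac.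
    - limit_tac. }
  rewrite Hu0, Hv0 in Hconst. lra.
Qed.

Lemma warmup_activation_ge t : 0 <= t <= Twu -> eps ^ 2 <= u t * v t.
Proof.
  intros Ht.
  assert (Hdecr : (u t * v t - 1) ^ 2 <= (u 0 * v 0 - 1) ^ 2).
  { apply (nonincreasing_of_derive_nonpos (fun t => (u t * v t - 1) ^ 2)
      (fun x => - 4 * s * (1 - u x * v x) ^ 2 * (u x ^ 2 + v x ^ 2))); [lra | | | |].
    - intros x Hx. destruct (Hd x ltac:(lra)). eapply is_derive_eq; [derive_tac | ring].
    - intros x Hx. pose proof (pow2_ge_0 (1 - u x * v x)).
      pose proof (pow2_ge_0 (u x)). pose proof (pow2_ge_0 (v x)).
      assert (0 <= s * (1 - u x * v x) ^ 2) by (apply Rmult_le_pos; lra).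
      assert (0 <= s * (1 - u x * v x) ^ 2 * (u x ^ 2 + v x ^ 2)) by (apply Rmult_le_pos; lra). lra.
    - intros Hpos. destruct (Hc t Hpos). unfold continuous. limit_tac.
    - limit_tac. }
  rewrite Hu0, Hv0 in Hdecr.
  destruct (Rle_dec (eps ^ 2) (u t * v t)) as [| Hlt]; [assumption | exfalso].
  assert (0 < ((1 - u t * v t) - (1 - eps ^ 2)) * ((1 - u t * v t) + (1 - eps ^ 2)))
    by (apply Rmult_lt_0_compat; nra).
  replace (eps * eps) with (eps ^ 2) in Hdecr by ring. nra.
Qed.

Lemma warmup_balanced t : 0 <= t <= Twu -> u t = v t.
Proof.
  intros Ht. pose proof (warmup_sq_eq t Ht). pose proof (warmup_activation_ge t Ht).
  assert (Hprod : (u t - v t) * (u t + v t) = 0) by nra.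
  apply Rmult_integral in Hprod. destruct Hprod as [| Hopp]; [lra |].
  replace (v t) with (- u t) in * by lra. nra.
Qed.

(* [Psi] vanishes exactly on the logistic solution; along the flow [Psi' = 4 s (1 - u v) Psi]. *)
Lemma warmup_activation t : 0 <= t <= Twu -> u t ^ 2 = g eps s t.
Proof.
  intros Ht. set (C := (1 - eps ^ 2) / eps ^ 2).
  set (Psi := fun t => (1 - u t * v t) * exp (4 * s * t) - C * (u t * v t)).
  assert (Hzero : Psi t ^ 2 <= 0).
  { apply (Gronwall_nonpos (fun t => Psi t ^ 2) (fun x => 8 * s * (1 - u x * v x) * Psi x ^ 2) 0 t (8 * s));
      [lra | | | | |].
    - intros x Hx. destruct (Hd x ltac:(lra)). unfold Psi.
      eapply is_derive_eq; [derive_tac |]. rewrite (warmup_balanced x) by lra. ring.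
    - intros x Hx _. pose proof (warmup_activation_ge x ltac:(lra)).
      assert (0 <= s * (u x * v x) * Psi x ^ 2)
        by (apply Rmult_le_pos; [apply Rmult_le_pos | apply pow2_ge_0]; nra).
      nra.
    - intros Hpos. destruct (Hc t Hpos). pose proof (filterlim_id _ (locally t)).
      unfold continuous, Psi. limit_tac.
    - unfold Psi. pose proof (filterlim_at_right_id 0). limit_tac.
    - unfold Psi. rewrite Hu0, Hv0, Rmult_0_r, exp_0. unfold C.
      replace ((1 - eps * eps) * 1 - (1 - eps ^ 2) / eps ^ 2 * (eps * eps)) with 0 by (field; lra). lra. }
  assert (HPsi : Psi t = 0) by (pose proof (pow2_ge_0 (Psi t)); nra).
  unfold Psi in HPsi. rewrite <- (warmup_balanced t Ht) in HPsi.
  unfold g. fold C. replace (- 4 * s * t) with (- (4 * s * t)) by ring. rewrite exp_Ropp.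
  pose proof (exp_pos (4 * s * t)).
  assert (0 <= C) by (unfold C; apply Rle_mult_inv_pos; nra).
  apply (Rmult_eq_reg_r (exp (4 * s * t) * (1 + C * / exp (4 * s * t)))).
  - field_simplify; [nra | lra | nra].
  - apply Rgt_not_eq. apply Rmult_gt_0_compat; [lra |].
    assert (0 <= C * / exp (4 * s * t)) by (apply Rmult_le_pos; [| left; apply Rinv_0_lt_compat]; lra).
    lra.
Qed.

End Warmup.

Definition rdae_du (s uu vv D : R) : R :=
  2 * s * vv * (1 - cj (uu ^ 2 * s) D * uu * vv) - 2 * 1 * Dj (uu ^ 2 * s) D / uu.
Definition rdae_dv (s uu vv D : R) : R :=
  2 * s * cj (uu ^ 2 * s) D * uu * (1 - uu * vv).

Lemma rdae_imbalance_growth s uu vv D M : 0 < s -> 0 < D -> Rabs (uu * vv) <= M ->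
  2 * (uu - vv) * (rdae_du s uu vv D - rdae_dv s uu vv D) <= 8 * s * M * (uu - vv) ^ 2.
Proof.
  intros Hs HD HM. unfold rdae_du, rdae_dv, cj, Dj.
  pose proof (pow2_ge_0 (uu - vv)).
  assert (HM0 : 0 <= M) by (eapply Rle_trans; [apply Rabs_pos | exact HM]).
  assert (Hprod : uu * vv <= M) by (pose proof (Rle_abs (uu * vv)); lra).
  destruct (Rlt_dec D (uu ^ 2 * s)) as [Hact | Hin].
  - rewrite Rmin_right by lra.
    assert (Hu : uu <> 0) by (intros ->; simpl in Hact; lra).
    assert (Huu : 0 < uu ^ 2) by (apply pow2_gt_0; exact Hu).
    set (r := D / uu ^ 2).
    assert (Hr : 0 < r < s).
    { unfold r. split; [apply Rdiv_lt_0_compat; lra |].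
      apply (Rmult_lt_reg_r (uu ^ 2)); [lra |]. unfold Rdiv. rewrite Rmult_assoc, Rinv_l; lra. }
    replace (2 * (uu - vv) * (2 * s * vv * (1 - (1 - D / (uu ^ 2 * s)) * uu * vv) - 2 * 1 * D / uu
             - 2 * s * (1 - D / (uu ^ 2 * s)) * uu * (1 - uu * vv)))
      with (- (uu - vv) ^ 2 * (4 * s * (1 - uu * vv) + 4 * r * (uu * vv)))
      by (unfold r; field; split; lra).
    assert (0 <= (s - r) * (M - uu * vv)) by (apply Rmult_le_pos; lra).
    assert (0 <= (uu - vv) ^ 2 * (4 * s * (1 - uu * vv) + 4 * r * (uu * vv) + 8 * s * M))
      by (apply Rmult_le_pos; nra).
    lra.
  - rewrite Rmin_left by lra.
    replace (2 * (uu - vv) * (2 * s * vv * (1 - 0 * uu * vv) - 2 * 1 * (uu ^ 2 * s) / uu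
             - 2 * s * 0 * uu * (1 - uu * vv)))
      with (- 4 * s * (uu - vv) ^ 2)
      by (destruct (Req_dec uu 0) as [-> | Hu]; [unfold Rdiv; rewrite Rinv_0; ring | field; exact Hu]).
    assert (0 <= s * (uu - vv) ^ 2) by (apply Rmult_le_pos; lra).
    assert (0 <= s * M * (uu - vv) ^ 2) by (apply Rmult_le_pos; [apply Rmult_le_pos |]; lra).
    lra.
Qed.

Lemma rdae_du_balanced s uu D : 0 < D ->
  2 * uu * rdae_du s uu uu D = 4 * (1 - uu ^ 2) * Rmax (uu ^ 2 * s - D) 0.
Proof.
  intros HD. unfold rdae_du, cj, Dj.
  destruct (Rlt_dec D (uu ^ 2 * s)) as [Hact | Hin].
  - rewrite Rmin_right, Rmax_left by lra.
    assert (Hu : uu <> 0) by (intros ->; simpl in Hact; lra).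
    field. split; [exact Hu |]. intros ->. rewrite Rmult_0_r in Hact. lra.
  - rewrite Rmin_left, Rmax_right by lra.
    destruct (Req_dec uu 0) as [-> | Hu]; [ring | field; exact Hu].
Qed.

Section RDAE.

Variables (s Twu : R) (u v Dst : R -> R).
Hypothesis Hs : 0 < s.
Hypothesis HD : forall t, Twu <= t -> 0 < Dst t.
Hypothesis Hru : filterlim u (at_right Twu) (locally (u Twu)).
Hypothesis Hrv : filterlim v (at_right Twu) (locally (v Twu)).
Hypothesis Hc : forall t, Twu < t -> continuous u t /\ continuous v t.
Hypothesis Hd : forall t, Twu < t ->
  is_derive u t (rdae_du s (u t) (v t) (Dst t)) /\ is_derive v t (rdae_dv s (u t) (v t) (Dst t)).
Hypothesis Hbal0 : u Twu = v Twu.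
Hypothesis Hsq0 : u Twu ^ 2 <= 1.

Lemma rdae_balanced b : Twu <= b -> u b = v b.
Proof.
  intros Hb.
  destruct (bounded_on_closed_interval (fun t => u t * v t) Twu b Hb) as [M HM].
  { limit_tac. }
  { intros t Ht. destruct (Hc t ltac:(lra)). unfold continuous. limit_tac. }
  assert (Hgap : (u b - v b) ^ 2 <= 0).
  { apply (Gronwall_nonpos (fun t => (u t - v t) ^ 2)
      (fun x => 2 * (u x - v x) * (rdae_du s (u x) (v x) (Dst x) - rdae_dv s (u x) (v x) (Dst x)))
      Twu b (8 * s * M)); [lra | | | | | ].
    - intros x Hx. destruct (Hd x ltac:(lra)). eapply is_derive_eq; [derive_tac | ring].
    - intros x Hx _. apply rdae_imbalance_growth; [exact Hs | apply HD; lra | apply HM; lra].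
    - intros Hlt. destruct (Hc b Hlt). unfold continuous. limit_tac.
    - limit_tac.
    - rewrite Hbal0. lra. }
  destruct (Req_dec (u b - v b) 0) as [| Hne]; [lra |].
  pose proof (pow2_gt_0 _ Hne). lra.
Qed.

Lemma is_derive_rdae_sq x : Twu < x ->
  is_derive (fun t => u t ^ 2) x (4 * (1 - u x ^ 2) * Rmax (u x ^ 2 * s - Dst x) 0).
Proof.
  intros Hx. destruct (Hd x Hx). eapply is_derive_eq; [derive_tac |].
  rewrite <- rdae_du_balanced by (apply HD; lra). rewrite <- (rdae_balanced x) by lra. ring.
Qed.

Lemma rdae_sq_le_1 b : Twu <= b -> u b ^ 2 <= 1.
Proof.
  intros Hb.
  enough (u b ^ 2 - 1 <= 0) by lra.
  apply (Gronwall_nonpos (fun t => u t ^ 2 - 1)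
    (fun x => 4 * (1 - u x ^ 2) * Rmax (u x ^ 2 * s - Dst x) 0 - 0) Twu b 0); [lra | | | | | lra].
  - intros x Hx. apply is_derive_Rminus; [apply is_derive_rdae_sq; lra | apply is_derive_Rconst].
  - intros x Hx Hpos. pose proof (Rmax_r (u x ^ 2 * s - Dst x) 0). nra.
  - intros Hlt. destruct (Hc b Hlt). unfold continuous. limit_tac.
  - limit_tac.
Qed.

Lemma rdae_sq_nondecreasing b : Twu <= b -> u Twu ^ 2 <= u b ^ 2.
Proof.
  intros Hb.
  enough (- u b ^ 2 <= - u Twu ^ 2) by lra.
  apply (nonincreasing_of_derive_nonpos (fun t => - u t ^ 2)
    (fun x => - (4 * (1 - u x ^ 2) * Rmax (u x ^ 2 * s - Dst x) 0)) Twu b); [lra | | | |].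
  - intros x Hx. apply is_derive_Ropp, is_derive_rdae_sq. lra.
  - intros x Hx. pose proof (rdae_sq_le_1 x ltac:(lra)). pose proof (Rmax_r (u x ^ 2 * s - Dst x) 0).
    assert (0 <= (1 - u x ^ 2) * Rmax (u x ^ 2 * s - Dst x) 0) by (apply Rmult_le_pos; lra). lra.
  - intros Hlt. destruct (Hc b Hlt). unfold continuous. limit_tac.
  - limit_tac.
Qed.

(* The growth rate [4 s (1 - u^2) (lambda - D)^+] of [lambda] is at most [4 s (lambda - D0)^+],
   so Gronwall applies to [lambda - D0]. *)
Lemma rdae_inactive_stays (D0 : R) : (forall t, Twu <= t -> D0 <= Dst t) ->
  u Twu ^ 2 * s <= D0 -> forall b, Twu <= b -> u b ^ 2 * s <= D0.
Proof.
  intros HD0 Hin0 b Hb.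
  enough (u b ^ 2 * s - D0 <= 0) by lra.
  apply (Gronwall_nonpos (fun t => u t ^ 2 * s - D0)
    (fun x => 4 * (1 - u x ^ 2) * Rmax (u x ^ 2 * s - Dst x) 0 * s + u x ^ 2 * 0 - 0) Twu b (4 * s));
    [lra | | | | | lra].
  - intros x Hx. apply is_derive_Rminus; [| apply is_derive_Rconst].
    apply is_derive_Rmult; [apply is_derive_rdae_sq; lra | apply is_derive_Rconst].
  - intros x Hx Hpos. pose proof (rdae_sq_le_1 x ltac:(lra)). pose proof (HD0 x ltac:(lra)).
    pose proof (pow2_ge_0 (u x)).
    assert (Hmax : Rmax (u x ^ 2 * s - Dst x) 0 <= u x ^ 2 * s - D0) by (apply Rmax_lub; lra).
    assert (0 <= Rmax (u x ^ 2 * s - Dst x) 0) by apply Rmax_r.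
    assert ((1 - u x ^ 2) * Rmax (u x ^ 2 * s - Dst x) 0 <= u x ^ 2 * s - D0) by nra.
    nra.
  - intros Hlt. destruct (Hc b Hlt). unfold continuous. limit_tac.
  - limit_tac.
Qed.

End RDAE.

Section TwoPhase.

Variables (d : nat) (s : nat -> R) (eps R0 Twu : R) (u v : nat -> R -> R) (Dst : R -> R) (m : nat).
Hypothesis Hs : forall j, (j < d)%nat -> 0 < s j.
Hypothesis Hsdecr : forall j, (S j < d)%nat -> s (S j) < s j.
Hypothesis Heps : 0 < eps < 1.
Hypothesis HR0 : 0 < R0.
Hypothesis HTwu : 0 <= Twu.
Hypothesis Hinit : forall j, (j < d)%nat -> u j 0 = eps /\ v j 0 = eps.
Hypothesis Hcont : forall j, (j < d)%nat ->
  filterlim (u j) (at_right 0) (locally (u j 0)) /\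
  filterlim (v j) (at_right 0) (locally (v j 0)) /\
  (forall t, 0 < t -> continuous (u j) t /\ continuous (v j) t).
Hypothesis Hwu : forall j t, (j < d)%nat -> 0 < t < Twu ->
  is_derive (u j) t (2 * s j * v j t * (1 - u j t * v j t)) /\
  is_derive (v j) t (2 * s j * u j t * (1 - u j t * v j t)).
Hypothesis HDst : forall t, Twu <= t -> is_water_level d (lam s u t) R0 (Dst t).
Hypothesis Hrd : forall j t, (j < d)%nat -> Twu < t ->
  let c := cj (lam s u t j) (Dst t) in
  let D := Dj (lam s u t j) (Dst t) in
  is_derive (u j) t (2 * s j * v j t * (1 - c * u j t * v j t) - 2 * 1 * D / u j t) /\
  is_derive (v j) t (2 * s j * c * u j t * (1 - u j t * v j t)).
Hypothesis Hmwu : is_mwu d s eps Twu R0 m.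

Lemma warmup_end j : (j < d)%nat -> u j Twu = v j Twu /\ u j Twu ^ 2 = g eps (s j) Twu.
Proof.
  intros Hj. destruct (Hinit j Hj) as [Hu0 Hv0]. destruct (Hcont j Hj) as [Hru [Hrv Hc]].
  assert (HT : 0 <= Twu <= Twu) by lra.
  split; [apply (warmup_balanced (s j) eps Twu (u j) (v j))
         | apply (warmup_activation (s j) eps Twu (u j) (v j))];
    auto; intros; apply Hwu; auto.
Qed.

Lemma latent_variance_after_warmup j : (j < d)%nat ->
  (forall t, Twu <= t -> lam s u Twu j <= lam s u t j) /\
  (forall D0, (forall t, Twu <= t -> D0 <= Dst t) ->
     lam s u Twu j <= D0 -> forall t, Twu <= t -> lam s u t j <= D0).
Proof.
  intros Hj. destruct (warmup_end j Hj) as [Hbal0 Hsq0].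
  pose proof (g_bounds eps (s j) Twu Heps). pose proof (Hs j Hj).
  destruct (Hcont j Hj) as [Hru0 [Hrv0 Hc]].
  assert (Hru : filterlim (u j) (at_right Twu) (locally (u j Twu)))
    by (apply (filterlim_at_right_of_continuous_on _ 0); auto; apply Hc).
  assert (Hrv : filterlim (v j) (at_right Twu) (locally (v j Twu)))
    by (apply (filterlim_at_right_of_continuous_on _ 0); auto; apply Hc).
  assert (HD : forall t, Twu <= t -> 0 < Dst t) by (intros t Ht; apply HDst, Ht).
  assert (Hc' : forall t, Twu < t -> continuous (u j) t /\ continuous (v j) t)
    by (intros t Ht; apply Hc; lra).
  assert (Hd : forall t, Twu < t -> is_derive (u j) t (rdae_du (s j) (u j t) (v j t) (Dst t)) /\
                                     is_derive (v j) t (rdae_dv (s j) (u j t) (v j t) (Dst t)))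
    by (intros t Ht; exact (Hrd j t Hj Ht)).
  unfold lam. split.
  - intros t Ht. apply Rmult_le_compat_r; [lra |].
    apply (rdae_sq_nondecreasing (s j) Twu (u j) (v j) Dst); auto; lra.
  - intros D0 HD0 Hin0. apply (rdae_inactive_stays (s j) Twu (u j) (v j) Dst); auto; lra.
Qed.

Lemma water_level_nondecreasing t : Twu <= t -> Dst Twu <= Dst t.
Proof.
  intros Ht. apply (water_level_le_compat d (lam s u Twu) (lam s u t) R0); auto; [| apply HDst; lra].
  intros j Hj. split; [| apply (proj1 (latent_variance_after_warmup j Hj)), Ht].
  unfold lam. apply Rmult_le_pos; [apply pow2_ge_0 | left; apply Hs, Hj].
Qed.

Lemma inactive_at_warmup_end j : (m <= j < d)%nat -> lam s u Twu j <= Dst Twu.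
Proof.
  destruct Hmwu as [Hm [_ Hmax]].
  assert (Hlam : forall i, (i < d)%nat -> lam s u Twu i = s i * g eps (s i) Twu).
  { intros i Hi. unfold lam. rewrite (proj2 (warmup_end i Hi)). ring. }
  apply (inactive_beyond_rate_budget d (lam s u Twu) R0 (Dst Twu) m).
  - intros i Hi. rewrite Hlam by exact Hi. pose proof (g_bounds eps (s i) Twu Heps).
    pose proof (Hs i Hi). nra.
  - apply nonincreasing_of_succ. intros i Hi. rewrite !Hlam by lia.
    left. apply scaled_g_lt; [exact Heps | exact HTwu | apply Hs; lia | apply Hsdecr; lia].
  - apply HDst. lra.
  - intros Hmd Hcond. apply (Hmax (S m)); [lia |]. unfold mwu_cond.
    replace (S m - 1)%nat with m by lia.
    erewrite fsum_ext; [exact Hcond |]. intros i Hi. cbv beta. rewrite !Hlam by lia. reflexivity.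
Qed.

Lemma inactive_after_warmup j t : (m <= j < d)%nat -> Twu <= t -> lam s u t j <= Dst t.
Proof.
  intros Hj Ht.
  assert (lam s u t j <= Dst Twu); [| pose proof (water_level_nondecreasing t Ht); lra].
  apply (proj2 (latent_variance_after_warmup j ltac:(lia)));
    [exact water_level_nondecreasing | apply inactive_at_warmup_end, Hj | exact Ht].
Qed.

Lemma loss_after_warmup_ge t : Twu <= t ->
  INR m * delta s m R0 + (fsum d s - fsum m s) <= Lrec d s u v (Dst t) t.
Proof.
  intros Ht. destruct Hmwu as [Hm _].
  eapply Rle_trans.
  - apply (loss_lower_bound d m s (lam s u t) R0 (Dst t)); auto.
    intros j Hj. apply inactive_after_warmup; [exact Hj | exact Ht].
  - apply fsum_le. intros j Hj. apply mode_loss_ge; [apply Hs, Hj | apply HDst, Ht].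
Qed.

End TwoPhase.

Theorem theorem1
  (d : nat) (s : nat -> R) (eps R0 Twu : R)
  (u v : nat -> R -> R) (Dst : R -> R) (Linf : R) (m : nat) :
  (1 <= d)%nat ->
  (forall j, (j < d)%nat -> 0 < s j) ->
  (forall j, (S j < d)%nat -> s (S j) < s j) ->
  0 < eps < 1 -> 0 < R0 -> 0 <= Twu ->
  (* initial condition and continuity on [0, oo) *)
  (forall j, (j < d)%nat -> u j 0 = eps /\ v j 0 = eps) ->
  (forall j, (j < d)%nat ->
     filterlim (u j) (at_right 0) (locally (u j 0)) /\
     filterlim (v j) (at_right 0) (locally (v j 0)) /\
     (forall t, 0 < t -> continuous (u j) t /\ continuous (v j) t)) ->
  (* warm-up phase: plain autoencoder flow on [0, Twu] *)
  (forall j t, (j < d)%nat -> 0 < t < Twu ->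
     is_derive (u j) t (2 * s j * v j t * (1 - u j t * v j t)) /\
     is_derive (v j) t (2 * s j * u j t * (1 - u j t * v j t))) ->
  (* Dst t is the water level of the current latent variances *)
  (forall t, Twu <= t -> is_water_level d (lam s u t) R0 (Dst t)) ->
  (* RD-AE phase, beta = 1 *)
  (forall j t, (j < d)%nat -> Twu < t ->
     let c := cj (lam s u t j) (Dst t) in
     let D := Dj (lam s u t j) (Dst t) in
     is_derive (u j) t (2 * s j * v j t * (1 - c * u j t * v j t) - 2 * 1 * D / u j t) /\
     is_derive (v j) t (2 * s j * c * u j t * (1 - u j t * v j t))) ->
  (* L_rec^oo is the limit of the reconstruction loss *)
  is_lim (fun t => Lrec d s u v (Dst t) t) p_infty Linf ->
  is_mwu d s eps Twu R0 m ->
  (exists T, forall t, T <= t ->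
     le (fcount d (fun j => Dst t < lam s u t j)
        (fun j => Rlt_dec (Dst t) (lam s u t j))) m) /\
  Linf >= INR m * delta s m R0 + (fsum d s - fsum m s).
Proof.
  intros _ Hs Hsdecr Heps HR0 HTwu Hinit Hcont Hwu HDst Hrd Hlim Hmwu.
  split.
  - exists Twu. intros t Ht. apply fcount_le. intros j Hj. apply Rle_not_lt.
    apply (inactive_after_warmup d s eps R0 Twu u v Dst m); assumption.
  - apply Rle_ge. change (Rbar_le (INR m * delta s m R0 + (fsum d s - fsum m s)) Linf).
    apply (is_lim_le_loc (fun _ => INR m * delta s m R0 + (fsum d s - fsum m s))
      (fun t => Lrec d s u v (Dst t) t) p_infty); [| apply is_lim_const | exact Hlim].
    exists Twu. intros t Ht. apply (loss_after_warmup_ge d s eps R0 Twu u v Dst m); auto. lra.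
Qed.
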